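(* Let $A$ be an integral domain and let $\mathfrak{p}$ be a prime ideal of $A$. Then $\mathfrak{p}$ is a straight prime ideal of $A$ if and only if $\mathfrak{p}$ is a locally divided prime ideal of $A$, i.e. if and only if $\mathfrak{p}A_\mathfrak{m} = \mathfrak{p}A_\mathfrak{p}$ for every maximal ideal $\mathfrak{m}$ of $A$ containing $\mathfrak{p}$.
   Context: All rings are commutative with identity. An overring of a domain $A$ is a ring $B$ with $A\subseteq B\subseteq \operatorname{Frac}(A)$. A prime ideal $\mathfrak{p}$ of a domain $A$ is divided if $\mathfrak{p}=\mathfrak{p}A_\mathfrak{p}$. It is locally divided if $\mathfrak{p}A_\mathfrak{m}$ is a divided prime of $A_\mathfrak{m}$ for every maximal ideal $\mathfrak{m}\supseteq\mathfrak{p}$, equivalently $\mathfrak{p}A_\mathfrak{m}=\mathfrak{p}A_\mathfrak{p}$ for all such $\mathfrak{m}$. A prime ideal $\mathfrak{p}$ of $A$ is straight (and $A$ is said to be straight at $\mathfrak{p}$) if for every overring $B$ of $A$, the $(A/\mathfrak{p})$-module $B/\mathfrak{p}B$ is torsion-free. *)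

From HB Require Import structures.
From mathcomp Require Import all_boot all_order all_algebra.
From mathcomp Require Import fraction.
Set Implicit Arguments. Unset Strict Implicit. Unset Printing Implicit Defensive.
Import Order.TTheory GRing.Theory Num.Theory.
Local Open Scope ring_scope.

Notation Frac A := {fraction A}.
Definition emb (A : idomainType) (a : A) : Frac A := @FracField.tofrac A a.

Definition is_ideal (R : comNzRingType) (I : R -> Prop) : Prop :=
  I 0 /\ (forall x y, I x -> I y -> I (x + y)) /\
  (forall r x, I x -> I (r * x)).

Definition is_prime_ideal (R : comNzRingType) (P : R -> Prop) : Prop :=
  is_ideal P /\ ~ P 1 /\ (forall a b, P (a * b) -> P a \/ P b).

Definition is_maximal_ideal (R : comNzRingType) (M : R -> Prop) : Prop :=
  is_ideal M /\ ~ M 1 /\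
  (forall J : R -> Prop, is_ideal J -> (forall x, M x -> J x) ->
     J 1 \/ (forall x, J x -> M x)).

Definition is_overring (A : idomainType) (B : Frac A -> Prop) : Prop :=
  (forall a : A, B (emb a)) /\
  (forall x y, B x -> B y -> B (x - y)) /\
  (forall x y, B x -> B y -> B (x * y)) /\ B 1.

(* The localization A_q, viewed inside Frac(A): { a/s | a in A, s not in q }. *)
Definition loc (A : idomainType) (q : A -> Prop) : Frac A -> Prop :=
  fun x => exists a s : A, ~ q s /\ x = emb a / emb s.

(* The extension pB of an ideal p of A to an overring B (subring of Frac A):
   all finite sums  sum_i p_i b_i  with p_i in p, b_i in B. *)
Definition ext (A : idomainType) (p : A -> Prop) (B : Frac A -> Prop)
  : Frac A -> Prop :=
  fun x => exists n : nat, exists f : 'I_n -> A, exists g : 'I_n -> Frac A,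
    (forall i, p (f i) /\ B (g i)) /\ x = \sum_(i < n) emb (f i) * g i.

Definition locally_divided (A : idomainType) (p : A -> Prop) : Prop :=
  forall m : A -> Prop, is_maximal_ideal m -> (forall x, p x -> m x) ->
    forall x : Frac A, ext p (loc m) x <-> ext p (loc p) x.

(* B/pB is a torsion-free (A/p)-module: for a in A with a mod p <> 0 and
   b in B with (a mod p)(b mod pB) = 0, i.e. a*b in pB, we get b in pB. *)
Definition torsion_free_quotient (A : idomainType) (p : A -> Prop)
  (B : Frac A -> Prop) : Prop :=
  forall (a : A) (b : Frac A), ~ p a -> B b -> ext p B (emb a * b) -> ext p B b.

Definition straight (A : idomainType) (p : A -> Prop) : Prop :=
  forall B : Frac A -> Prop, is_overring B -> torsion_free_quotient p B.

(* If a b lies in pB with a outside p but b outside pB, the ideal {c | c b in pB} is proper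
   and contains p, so it lies in a maximal ideal m.  Writing b as a combination of fractions
   f/a in pA_p = pA_m and clearing denominators yields s outside m with s b in pB, which is
   absurd.

   Conversely let m be maximal over p, q in p, t outside p and u = q/t.  In B = A_m[1/u] the
   element t = q (1/u) lies in pB, so straightness puts 1 in pB and u is integral over A_m.
   In B = A_m[u] the element t u = q lies in pB, so u is in pA_m[u]; since A_m[u] is a finite
   A_m-module and pA_m is in the maximal ideal of A_m, Nakayama's lemma gives u in A_m, and
   then u in pA_m because p is prime. *)

From HB Require Import structures.
From mathcomp Require Import all_boot all_order all_algebra.
From mathcomp Require Import fraction.
From mathcomp Require Import ring zify.
From mathcomp Require classical_sets.
From Stdlib Require Import Classical.
Set Implicit Arguments. Unset Strict Implicit. Unset Printing Implicit Defensive.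
Import Order.TTheory GRing.Theory Num.Theory.
Local Open Scope ring_scope.

Section Ideals.
Variable R : comNzRingType.

Section Closure.
Variables (I : R -> Prop) (I_ideal : is_ideal I).

Lemma ideal0 : I 0. Proof. by case: I_ideal. Qed.

Lemma idealD x y : I x -> I y -> I (x + y).
Proof. by case: I_ideal => _ [+ _]; apply. Qed.

Lemma idealMl r x : I x -> I (r * x).
Proof. by case: I_ideal => _ [_]; apply. Qed.

Lemma idealMr r x : I x -> I (x * r).
Proof. by rewrite mulrC; apply: idealMl. Qed.

End Closure.

Lemma prime_is_ideal (P : R -> Prop) : is_prime_ideal P -> is_ideal P.
Proof. by case. Qed.

Lemma prime_notin1 (P : R -> Prop) : is_prime_ideal P -> ~ P 1.
Proof. by case=> _ []. Qed.

Lemma prime_notinM (P : R -> Prop) a b : is_prime_ideal P -> ~ P a -> ~ P b -> ~ P (a * b).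
Proof. by case=> _ [_ Pab] Na Nb /Pab []. Qed.

Lemma maximal_is_prime (M : R -> Prop) : is_maximal_ideal M -> is_prime_ideal M.
Proof.
move=> [M_ideal [M1 M_max]]; split=> //; split=> // a b Mab.
case: (classic (M a)) => Ma; [by left | right].
pose J x := exists y r, M y /\ x = y + r * a.
have J_ideal : is_ideal J.
  split; first by exists 0, 0; rewrite mul0r addr0; split=> //; apply: ideal0.
  split=> [x y [y1 [r1 [My1 ->]]] [y2 [r2 [My2 ->]]] | r x [y1 [r1 [My1 ->]]]].
    by exists (y1 + y2), (r1 + r2); split; [exact: idealD | ring].
  by exists (r * y1), (r * r1); split; [exact: idealMl | ring].
have MJ x : M x -> J x by exists x, 0; rewrite mul0r addr0.
have [[y [r [My Ey]]] | JM] := M_max J J_ideal MJ; last first.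
  by case: Ma; apply: JM; exists 0, 1; rewrite add0r mul1r; split=> //; apply: ideal0.
have -> : b = y * b + r * (a * b) by rewrite mulrA -mulrDl -Ey mul1r.
by apply: idealD => //; [exact: idealMr | exact: idealMl].
Qed.

Lemma ideal_chain_union (F : classical_sets.set (R -> Prop)) :
  (forall I x, F I -> I x -> is_ideal I) ->
  classical_sets.total_on F classical_sets.subset ->
  (exists I x, F I /\ I x) -> is_ideal (classical_sets.bigcup F id).
Proof.
move=> F_ideal F_chain [I0 [x0 [FI0 I0x0]]].
split; first by exists I0 => //; exact: (ideal0 (F_ideal _ _ FI0 I0x0)).
split=> [x y [I FI Ix] [I' FI' I'y] | r x [I FI Ix]]; last first.
  by exists I => //; exact: (idealMl (F_ideal _ _ FI Ix)).
have [II'|I'I] := F_chain I I' FI FI'.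
  by exists I' => //; exact: (idealD (F_ideal _ _ FI' I'y) (II' _ Ix)).
by exists I => //; exact: (idealD (F_ideal _ _ FI Ix) Ix (I'I _ I'y)).
Qed.

Lemma maximal_ideal_exists (J : R -> Prop) : is_ideal J -> ~ J 1 ->
  exists M, is_maximal_ideal M /\ forall x, J x -> M x.
Proof.
move=> J_ideal J1.
pose over_J I := is_ideal I /\ (forall x, J x -> I x) /\ ~ I 1.
(* Empty sets are admitted so that the union of the empty chain qualifies. *)
pose P I := (forall x, ~ I x) \/ over_J I.
have over_J_P I x : P I -> I x -> over_J I by case=> [/(_ x) //|].
have [F FP F_chain | M [PM M_max]] := @classical_sets.Zorn_bigcup R P.
  have [[x [I FI Ix]] | F0] := classic (exists x, exists2 I, F I & I x); last first.
    by left=> x [I FI Ix]; apply: F0; exists x, I.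
  right; split.
    apply: ideal_chain_union F_chain _; last by exists I, x.
    by move=> I' y FI' I'y; case: (over_J_P I' y (FP _ FI') I'y).
  have [_ [JI _]] := over_J_P I x (FP _ FI) Ix.
  split=> [y /JI Iy | [I' FI' I'1]]; first by exists I.
  by have [_ []] := over_J_P I' 1 (FP _ FI') I'1.
have [M_ideal [JM M1]] : over_J M.
  case: PM => // M0; exfalso; apply: (M_max J); last by right.
  by split=> [x /M0 [] | /(_ 0 (ideal0 J_ideal)) /M0].
exists M; split=> //; split=> //; split=> // I I_ideal MI.
have [|I1] := classic (I 1); [by left | right].
apply: NNPP => IM; apply: (M_max I); last by right; split=> //; split=> // x /JM /MI.
by split=> // IM'; apply: IM => x /IM'.
Qed.

End Ideals.

HB.instance Definition _ (A : idomainType) :=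
  GRing.RMorphism.copy (@emb A) (@FracField.tofrac A).

Section Localization.
Variable A : idomainType.
Local Notation K := {fraction A}.

Lemma emb_eq0 (a : A) : (emb a == 0) = (a == 0).
Proof. exact: tofrac_eq0. Qed.

Lemma emb_inj : injective (@emb A).
Proof. by move=> a b /eqP; rewrite tofrac_eq => /eqP. Qed.

Variables (p Q : A -> Prop).

Definition loc_ideal : K -> Prop :=
  fun x => exists a s, p a /\ ~ Q s /\ x = emb a / emb s.

Hypothesis Q_prime : is_prime_ideal Q.

Lemma emb_notin_neq0 s : ~ Q s -> emb s != 0.
Proof.
rewrite emb_eq0 => Qs; apply/eqP=> s0; apply: Qs; rewrite s0.
exact: ideal0 (prime_is_ideal Q_prime).
Qed.

Lemma frac_add (a b s t : A) : ~ Q s -> ~ Q t ->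
  emb a / emb s + emb b / emb t = emb (a * t + b * s) / emb (s * t).
Proof.
by move=> Qs Qt; rewrite addf_div ?emb_notin_neq0 // rmorphD !rmorphM.
Qed.

Lemma frac_mul (a b s t : A) : emb a / emb s * (emb b / emb t) = emb (a * b) / emb (s * t).
Proof. by rewrite mulf_div !rmorphM. Qed.

Lemma loc_frac a s : ~ Q s -> loc Q (emb a / emb s).
Proof. by exists a, s. Qed.

Lemma loc_emb a : loc Q (emb a).
Proof. by exists a, 1; rewrite rmorph1 divr1; split=> //; apply: prime_notin1. Qed.

Lemma loc0 : loc Q 0.
Proof. by rewrite -(rmorph0 (@emb A)); apply: loc_emb. Qed.

Lemma loc1 : loc Q 1.
Proof. by rewrite -(rmorph1 (@emb A)); apply: loc_emb. Qed.

Lemma locD x y : loc Q x -> loc Q y -> loc Q (x + y).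
Proof.
move=> [a [s [Qs ->]]] [b [t [Qt ->]]]; rewrite frac_add //.
by apply: loc_frac; apply: prime_notinM.
Qed.

Lemma locM x y : loc Q x -> loc Q y -> loc Q (x * y).
Proof.
move=> [a [s [Qs ->]]] [b [t [Qt ->]]]; rewrite frac_mul.
by apply: loc_frac; apply: prime_notinM.
Qed.

Lemma locN x : loc Q x -> loc Q (- x).
Proof. by move=> [a [s [Qs ->]]]; rewrite -mulNr -rmorphN; apply: loc_frac. Qed.

Lemma loc_sum n (F : 'I_n -> K) : (forall i, loc Q (F i)) -> loc Q (\sum_(i < n) F i).
Proof. by move=> FQ; apply: (big_ind (loc Q)) => //; [apply: loc0 | apply: locD]. Qed.

Lemma loc_ideal_loc x : loc_ideal x -> loc Q x.
Proof. by move=> [a [s [_ [Qs ->]]]]; apply: loc_frac. Qed.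

Hypothesis p_ideal : is_ideal p.

Lemma loc_ideal_emb a : p a -> loc_ideal (emb a).
Proof. by exists a, 1; rewrite rmorph1 divr1; do 2?split=> //; apply: prime_notin1. Qed.

Lemma loc_ideal0 : loc_ideal 0.
Proof. by rewrite -(rmorph0 (@emb A)); apply: loc_ideal_emb; apply: ideal0. Qed.

Lemma loc_idealD x y : loc_ideal x -> loc_ideal y -> loc_ideal (x + y).
Proof.
move=> [a [s [pa [Qs ->]]]] [b [t [pb [Qt ->]]]]; rewrite frac_add //.
exists (a * t + b * s), (s * t); split; last by split=> //; apply: prime_notinM.
by apply: idealD => //; apply: idealMr.
Qed.

Lemma loc_idealMl r x : loc Q r -> loc_ideal x -> loc_ideal (r * x).
Proof.
move=> [a [s [Qs ->]]] [b [t [pb [Qt ->]]]]; rewrite frac_mul.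
exists (a * b), (s * t); split; last by split=> //; apply: prime_notinM.
exact: idealMl.
Qed.

Lemma loc_idealMr r x : loc Q r -> loc_ideal x -> loc_ideal (x * r).
Proof. by rewrite mulrC; apply: loc_idealMl. Qed.

Lemma loc_ideal_sum n (F : 'I_n -> K) :
  (forall i, loc_ideal (F i)) -> loc_ideal (\sum_(i < n) F i).
Proof.
by move=> Fp; apply: (big_ind loc_ideal) => //; [apply: loc_ideal0 | apply: loc_idealD].
Qed.

Lemma ext_loc x : ext p (loc Q) x <-> loc_ideal x.
Proof.
split=> [[n [f [g [fg ->]]]] | [a [s [pa [Qs ->]]]]].
  apply: loc_ideal_sum => i; have [pf Qg] := fg i.
  by rewrite mulrC; apply: loc_idealMl => //; apply: loc_ideal_emb.
exists 1%N, (fun=> a), (fun=> emb 1 / emb s); split; first by move=> _; split=> //; exists 1, s.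
by rewrite big_ord1 rmorph1 mul1r.
Qed.

Hypothesis pQ : forall x, p x -> Q x.

(* [pA_Q] lies in the maximal ideal of the local ring [A_Q]. *)
Lemma loc_ideal_unit c : loc_ideal c -> exists2 w, loc Q w & w * (1 - c) = 1.
Proof.
move=> [a [s [pa [Qs ->]]]].
have Qsa : ~ Q (s - a).
  move=> Qsa; apply: Qs; rewrite -(subrK a s).
  by apply: idealD (prime_is_ideal Q_prime) _ _ Qsa (pQ pa).
exists (emb s / emb (s - a)); first exact: loc_frac.
have s0 := emb_notin_neq0 Qs; have := emb_notin_neq0 Qsa; rewrite rmorphB => sa0.
have -> : 1 - emb a / emb s = (emb s - emb a) / emb s by rewrite mulrBl divff.
by rewrite mulf_div [_ * emb s]mulrC divff // mulf_neq0.
Qed.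

End Localization.

Definition adjoin (R : nzRingType) (S : R -> Prop) (v : R) : R -> Prop :=
  fun y => exists T : {poly R}, (forall i, S T`_i) /\ y = T.[v].

(* [u] is a root of the monic polynomial ['X^d - G] with coefficients in [S]. *)
Definition integral_over (R : nzRingType) (S : R -> Prop) (u : R) : Prop :=
  exists d (G : {poly R}), [/\ forall i, S G`_i, (size G <= d)%N & u ^+ d = G.[u]].

Section HornerReduce.
Variables (R : comNzRingType) (S I : R -> Prop).
Hypotheses (I0 : I 0) (ID : forall x y, I x -> I y -> I (x + y))
  (IM : forall r x, S r -> I x -> I (r * x)).
Variables (u : R) (d : nat) (G : {poly R}).
Hypotheses (GS : forall i, S G`_i) (size_G : (size G <= d)%N) (uG : u ^+ d = G.[u]).

Lemma horner_reduce (H : {poly R}) : (forall i, I H`_i) ->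
  exists H' : {poly R}, [/\ forall i, I H'`_i, (size H' <= d)%N & H'.[u] = H.[u]].
Proof.
elim: {H}(size H) {-2}H (leqnn (size H)) => [|n IHn] H size_H HI.
  by exists H; split=> //; apply: leq_trans size_H _.
have [H_small|H_big] := leqP (size H) d; first by exists H.
(* Since [u ^+ d = G.[u]], the factor ['X^d] of the tail of [H] may be replaced by [G]. *)
pose H1 := take_poly d H + G * drop_poly d H.
have [||H' [H'I size_H' H'E]] := IHn H1; last first.
- exists H'; split=> //; rewrite H'E /H1 -[in RHS](poly_take_drop d H).
  by rewrite !hornerD !hornerM hornerXn -uG mulrC.
- move=> i; rewrite coefD coef_take_poly coefM; apply: ID; first by case: ifP.
  by apply: (big_ind I) => // j _; apply: IM; rewrite ?coef_drop_poly.
- have := size_take_poly d H; have := size_polyMleq G (drop_poly d H).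
  rewrite size_drop_poly => size_GD size_take.
  apply: leq_trans (size_polyD _ _) _; rewrite geq_max; apply/andP; split; lia.
Qed.

End HornerReduce.

Section ExtensionToOverrings.
Variables (A : idomainType) (p : A -> Prop) (B : {fraction A} -> Prop).
Hypothesis B_overring : is_overring B.

Lemma overring_emb a : B (emb a).
Proof. by case: B_overring. Qed.

Lemma overringM x y : B x -> B y -> B (x * y).
Proof. by case: B_overring => _ [_ [BM _]]; apply: BM. Qed.

Lemma ext0 : ext p B 0.
Proof. by exists 0%N, (fun=> 0), (fun=> 0); split; [case | rewrite big_ord0]. Qed.

Lemma ext_emb_mul f g : p f -> B g -> ext p B (emb f * g).
Proof. by move=> pf Bg; exists 1%N, (fun=> f), (fun=> g); rewrite big_ord1. Qed.

Lemma extD x y : ext p B x -> ext p B y -> ext p B (x + y).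
Proof.
move=> [n1 [f1 [g1 [fg1 ->]]]] [n2 [f2 [g2 [fg2 ->]]]].
exists (n1 + n2)%N, (fun i => match split i with inl j => f1 j | inr j => f2 j end),
  (fun i => match split i with inl j => g1 j | inr j => g2 j end).
split=> [i|]; first by case: (split i).
rewrite big_split_ord; congr (_ + _); apply: eq_bigr => j _.
  by have /= -> := unsplitK (inl j : 'I_n1 + 'I_n2).
by have /= -> := unsplitK (inr j : 'I_n1 + 'I_n2).
Qed.

Lemma extMl r y : B r -> ext p B y -> ext p B (r * y).
Proof.
move=> Br [n [f [g [fg ->]]]]; exists n, f, (fun i => r * g i); split.
  by move=> i; have [pf Bg] := fg i; split=> //; apply: overringM.
by rewrite mulr_sumr; apply: eq_bigr => i _; rewrite mulrCA.
Qed.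

End ExtensionToOverrings.

Section AdjoinToLocalization.
Variables (A : idomainType) (p Q : A -> Prop).
Hypotheses (Q_prime : is_prime_ideal Q) (p_ideal : is_ideal p).
Local Notation K := {fraction A}.

Lemma poly_coefC_loc (c : K) : loc Q c -> forall i, loc Q c%:P`_i.
Proof. by move=> Qc i; rewrite coefC; case: eqP => _; [| apply: loc0]. Qed.

Lemma adjoin1 v : adjoin (loc Q) v 1.
Proof. by exists 1%:P; rewrite hornerC; split=> //; apply/poly_coefC_loc/loc1. Qed.

Lemma adjoin_overring v : is_overring (adjoin (loc Q) v).
Proof.
split=> [a|]; first by exists (emb a)%:P; rewrite hornerC; split=> //; apply/poly_coefC_loc/loc_emb.
split=> [x y [T1 [T1Q ->]] [T2 [T2Q ->]]|].
  exists (T1 - T2); rewrite hornerD hornerN; split=> // i.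
  by rewrite coefB; apply: locD => //; apply: locN.
split=> [x y [T1 [T1Q ->]] [T2 [T2Q ->]]|].
  exists (T1 * T2); rewrite hornerM; split=> // i.
  by rewrite coefM; apply: loc_sum => // j; apply: locM.
exact: adjoin1.
Qed.

Lemma adjoin_id v : adjoin (loc Q) v v.
Proof.
exists 'X; rewrite hornerX; split=> // i.
by rewrite coefX; case: eqP => _; [apply: loc1 | apply: loc0].
Qed.

Lemma ext_adjoin v y : ext p (adjoin (loc Q) v) y -> adjoin (loc_ideal p Q) v y.
Proof.
move=> [n [f [g [fg ->]]]].
have /fin_all_exists [T TQ] :
    forall i, exists T : {poly K}, (forall j, loc Q T`_j) /\ g i = T.[v].
  by move=> i; have [_ [T]] := fg i; exists T.
exists (\sum_(i < n) emb (f i) *: T i); split=> [j|].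
  rewrite coef_sum; apply: loc_ideal_sum => // i; rewrite coefZ.
  by have [pf _] := fg i; have [TiQ _] := TQ i; apply: loc_idealMr => //; apply: loc_ideal_emb.
by rewrite horner_sum; apply: eq_bigr => i _; have [_ ->] := TQ i; rewrite hornerZ.
Qed.

End AdjoinToLocalization.

Section LocalLinearSystem.
Variables (A : idomainType) (p Q : A -> Prop).
Hypotheses (Q_prime : is_prime_ideal Q) (p_ideal : is_ideal p) (pQ : forall x, p x -> Q x).
Local Notation K := {fraction A}.

Definition loc_comb n (g : 'I_n -> K) (x : K) : Prop :=
  exists r (c : 'I_n -> K),
    [/\ loc Q r, forall j, loc_ideal p Q (c j) & x = r + \sum_(j < n) c j * g j].

Lemma loc_comb_loc n (g : 'I_n -> K) x :
  (forall j, loc Q (g j)) -> loc_comb g x -> loc Q x.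
Proof.
move=> gQ [r [c [rQ cp ->]]]; apply: locD => //; apply: loc_sum => // j.
by apply: locM => //; apply: loc_ideal_loc.
Qed.

Section Pivot.
Variables (n : nat) (g : 'I_n.+1 -> K).
Local Notation g' := (fun j : 'I_n => g (lift ord0 j)).

Lemma loc_comb_solve_first : loc_comb g (g ord0) -> loc_comb g' (g ord0).
Proof.
move=> [r [c [rQ cp]]]; rewrite big_ord_recl => g0E.
have [w wQ w_inv] := loc_ideal_unit Q_prime pQ (cp ord0).
exists (w * r), (fun j => w * c (lift ord0 j)); split.
- exact: locM.
- by move=> j; apply: loc_idealMl.
have g0E' : (1 - c ord0) * g ord0 = r + \sum_(j < n) c (lift ord0 j) * g (lift ord0 j).
  by rewrite mulrBl mul1r {1}g0E; ring.
rewrite -[g ord0]mul1r -w_inv -mulrA g0E' mulrDr mulr_sumr; congr (_ + _).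
by apply: eq_bigr => j _; rewrite mulrA.
Qed.

Lemma loc_comb_subst_first x :
  loc_comb g x -> loc_comb g' (g ord0) -> loc_comb g' x.
Proof.
move=> [r [c [rQ cp ->]]] [r0 [c0 [r0Q c0p g0E]]].
exists (r + c ord0 * r0), (fun j => c (lift ord0 j) + c ord0 * c0 j); split.
- by apply: locD => //; apply: locM => //; apply: loc_ideal_loc.
- by move=> j; apply: loc_idealD => //; apply: loc_idealMl => //; apply: loc_ideal_loc.
rewrite big_ord_recl g0E.
have -> : \sum_(j < n) (c (lift ord0 j) + c ord0 * c0 j) * g (lift ord0 j) =
    \sum_(j < n) c (lift ord0 j) * g (lift ord0 j) +
    c ord0 * \sum_(j < n) c0 j * g (lift ord0 j).
  by rewrite mulr_sumr -big_split; apply: eq_bigr => j _; rewrite /= mulrDl mulrA.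
ring.
Qed.

End Pivot.

(* Gaussian elimination: the pivots [1 - c] are units of [A_Q]. *)
Lemma loc_of_loc_comb n (g : 'I_n -> K) :
  (forall i, loc_comb g (g i)) -> forall i, loc Q (g i).
Proof.
elim: n g => [|n IHn] g g_comb; first by case.
have g0_comb := loc_comb_solve_first (g_comb ord0).
have g'Q := IHn _ (fun i => loc_comb_subst_first (g_comb (lift ord0 i)) g0_comb).
have g0Q := loc_comb_loc g'Q g0_comb.
by move=> i; case: (unliftP ord0 i) => [j ->|->].
Qed.

End LocalLinearSystem.

Section Integrality.
Variables (A : idomainType) (p Q : A -> Prop).
Hypotheses (Q_prime : is_prime_ideal Q) (p_ideal : is_ideal p) (pQ : forall x, p x -> Q x).
Local Notation K := {fraction A}.

Lemma integral_of_adjoin_inv (u v : K) :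
  v * u = 1 -> adjoin (loc_ideal p Q) v 1 -> integral_over (loc Q) u.
Proof.
move=> vu [S [Sp S1]]; set d := size S.
have [w wQ w_inv] := loc_ideal_unit Q_prime pQ (Sp 0%N).
have uv_pow i : (i <= d)%N -> u ^+ d * v ^+ (d - i) = u ^+ i.
  move=> le_id; rewrite -{1}(subnKC le_id) exprD -mulrA -exprMn.
  by rewrite [u * v]mulrC vu expr1n mulr1.
(* Multiplying [1 = S.[v]] by [u ^+ d] gives a relation of degree [d] in [u]. *)
have udE : u ^+ d = S`_0 * u ^+ d + \sum_(i < d) S`_(d - i) * u ^+ i.
  rewrite -[LHS]mulr1 S1 (horner_coef_wide _ (leqnSn d)) mulr_sumr.
  rewrite (reindex_inj rev_ord_inj) big_ord_recr /= subnn addrC.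
  rewrite expr0 mulr1 [u ^+ d * _]mulrC; congr (_ + _).
  by apply: eq_bigr => i _; rewrite subSS mulrCA uv_pow // ltnW.
exists d, (w *: \poly_(i < d) S`_(d - i)); split.
- move=> i; rewrite coefZ coef_poly; case: ifP => _; last by rewrite mulr0; apply: loc0.
  by apply: locM => //; exact: loc_ideal_loc (Sp _).
- exact: leq_trans (size_scale_leq _ _) (size_poly _ _).
rewrite hornerZ horner_poly -[LHS]mul1r -w_inv -mulrA mulrBl mul1r.
by rewrite {1}udE addrAC subrr add0r.
Qed.

(* Nakayama: each [u ^+ j] with [j < d] lies in [A_Q + sum_(k < d) pA_Q u ^+ k]. *)
Lemma loc_of_integral (u : K) :
  integral_over (loc Q) u -> adjoin (loc_ideal p Q) u u -> loc Q u.
Proof.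
move=> [d [G [GQ size_G uG]]] [T [Tp uT]].
have reduce := horner_reduce (loc_ideal0 Q_prime p_ideal) (loc_idealD Q_prime p_ideal)
  (loc_idealMl Q_prime p_ideal) GQ size_G uG.
have [T' [T'p size_T' uT']] := reduce T Tp; rewrite -uT in uT'.
pose g (j : 'I_d) := u ^+ j.
have gQ : forall j, loc Q (g j).
  apply: (loc_of_loc_comb Q_prime p_ideal pQ) => -[[|j] lt_jd].
    exists 1, (fun=> 0); split=> //; [exact: loc1 | by move=> _; apply: loc_ideal0 |].
    by rewrite big1 ?addr0 // => k _; rewrite mul0r.
  have [|H [Hp size_H uH]] := reduce ('X^j * T').
    by move=> i; rewrite coefXnM; case: ifP => _; [apply: loc_ideal0 | apply: T'p].
  exists 0, (fun k => H`_k); split=> //; first exact: loc0.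
  by rewrite add0r -horner_coef_wide // uH hornerM hornerXn uT' /g exprSr.
rewrite -uT' (horner_coef_wide _ size_T'); apply: loc_sum => // j.
by apply: locM => //; [exact: (loc_ideal_loc (T'p j)) | exact: gQ].
Qed.

End Integrality.

Section StraightImpliesLocallyDivided.
Variables (A : idomainType) (p m : A -> Prop).
Hypotheses (p_prime : is_prime_ideal p) (m_prime : is_prime_ideal m).
Hypotheses (pm : forall x, p x -> m x) (p_straight : straight p).

Lemma straight_frac_loc_ideal q t : p q -> ~ p t -> loc_ideal p m (emb q / emb t).
Proof.
move=> pq pt; have p_ideal := prime_is_ideal p_prime.
have [->|q0] := eqVneq q 0; first by rewrite rmorph0 mul0r; apply: loc_ideal0.
have t0 := emb_notin_neq0 p_prime pt.
have {}q0 : emb q != 0 by rewrite emb_eq0.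
set u := emb q / emb t; set v := emb t / emb q.
have vu : v * u = 1 by rewrite mulf_div [emb q * _]mulrC divff // mulf_neq0.
have qv : emb q * v = emb t by rewrite mulrC divfK.
have tu : emb t * u = emb q by rewrite mulrC divfK.
have straight_adjoin w b c : adjoin (loc m) w b -> adjoin (loc m) w c ->
    emb t * b = emb q * c -> adjoin (loc_ideal p m) w b.
  move=> wb wc tbE; apply: (ext_adjoin m_prime p_ideal).
  apply: (p_straight (adjoin_overring m_prime w) pt wb); rewrite tbE.
  exact: ext_emb_mul.
have one_in : adjoin (loc_ideal p m) v 1.
  by apply: (straight_adjoin _ _ v); [exact: adjoin1 | exact: adjoin_id | rewrite mulr1 qv].
have u_in : adjoin (loc_ideal p m) u u.
  by apply: (straight_adjoin _ _ 1); [exact: adjoin_id | exact: adjoin1 | rewrite mulr1 tu].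
have [a [s [ms uE]]] := loc_of_integral m_prime p_ideal pm
  (integral_of_adjoin_inv m_prime pm vu one_in) u_in.
exists a, s; split=> //; have s0 := emb_notin_neq0 m_prime ms.
move/eqP: uE; rewrite eqr_div // -!rmorphM => /eqP /emb_inj qsE.
have [//|//] : p a \/ p t.
  by case: p_prime => _ [_]; apply; rewrite -qsE; apply: idealMr.
Qed.

End StraightImpliesLocallyDivided.

Lemma straight_locally_divided (A : idomainType) (p : A -> Prop) :
  is_prime_ideal p -> straight p -> locally_divided p.
Proof.
move=> p_prime p_straight m m_max pm x; have m_prime := maximal_is_prime m_max.
have p_ideal := prime_is_ideal p_prime.
rewrite !ext_loc //; split=> -[a [s [pa [ms ->]]]]; first by exists a, s; split=> //; split=> // /pm.
exact: straight_frac_loc_ideal.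
Qed.

Section LocallyDividedImpliesStraight.
Variables (A : idomainType) (p : A -> Prop) (B : {fraction A} -> Prop).
Hypothesis B_overring : is_overring B.
Local Notation K := {fraction A}.

Lemma ext_colon_ideal b : is_ideal (fun c => ext p B (emb c * b)).
Proof.
split; first by rewrite rmorph0 mul0r; apply: ext0.
split=> [x y xb yb | r x xb]; first by rewrite rmorphD mulrDl; apply: extD.
by rewrite rmorphM -mulrA; apply: extMl => //; apply: overring_emb.
Qed.

Lemma ext_clear_denominators (m : A -> Prop) : is_prime_ideal m ->
  forall n (z g : 'I_n -> K), (forall i, loc_ideal p m (z i) /\ B (g i)) ->
  exists2 s, ~ m s & ext p B (emb s * \sum_(i < n) z i * g i).
Proof.
move=> m_prime; elim=> [|n IHn] z g zg.
  by exists 1; [apply: prime_notin1 | rewrite big_ord0 mulr0; apply: ext0].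
have [s1 ms1 s1E] := IHn _ _ (fun i => zg (lift ord0 i)).
have [[a [s0 [pa [ms0 z0E]]]] Bg0] := zg ord0.
exists (s1 * s0); first exact: prime_notinM.
rewrite big_ord_recl z0E; set S := \sum_(i < n) _ in s1E *.
have -> : emb (s1 * s0) * (emb a / emb s0 * g ord0 + S) =
    emb s1 * (emb a * g ord0) + emb s0 * (emb s1 * S).
  have az : emb s0 * (emb a / emb s0) = emb a by rewrite mulrC divfK ?(emb_notin_neq0 m_prime).
  by rewrite rmorphM; move: (emb a / emb s0) az => y <-; ring.
by apply: extD; apply: extMl => //; [apply: overring_emb | apply: ext_emb_mul | apply: overring_emb].
Qed.

End LocallyDividedImpliesStraight.

Lemma locally_divided_straight (A : idomainType) (p : A -> Prop) :
  is_prime_ideal p -> locally_divided p -> straight p.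
Proof.
move=> p_prime p_ldiv B B_overring a b pa Bb [n [f [g [fg abE]]]].
have p_ideal := prime_is_ideal p_prime.
apply: NNPP => pb.
have [|m [m_max colon_m]] := maximal_ideal_exists (ext_colon_ideal p B_overring b).
  by rewrite rmorph1 mul1r.
have m_prime := maximal_is_prime m_max.
have pm x : p x -> m x by move=> px; apply: colon_m; apply: ext_emb_mul.
have a0 := emb_notin_neq0 p_prime pa.
have bE : b = \sum_(i < n) (emb (f i) / emb a) * g i.
  apply: (mulfI a0); rewrite abE mulr_sumr; apply: eq_bigr => i _.
  by rewrite mulrA [emb a * _]mulrC divfK.
have [|s ms sb] :=
  @ext_clear_denominators _ p _ B_overring _ m_prime _ (fun i => emb (f i) / emb a) g.
  move=> i; have [pf Bg] := fg i; split=> //.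
  apply/(ext_loc m_prime p_ideal)/(p_ldiv m m_max pm)/(ext_loc p_prime p_ideal).
  by exists (f i), a.
by apply: ms; apply: colon_m; rewrite bE.
Qed.

Theorem theorem3p1 (A : idomainType) (p : A -> Prop) :
  is_prime_ideal p -> (straight p <-> locally_divided p).
Proof.
move=> p_prime; split; [exact: straight_locally_divided | exact: locally_divided_straight].
Qed.
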